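(* Let two groups of positive integer moduli be given: Group $j$ ($j=1,2$) consists of $L_j\ge1$ moduli $0<M_{j,1}<\dots<M_{j,L_j}$; put $\delta_j=\operatorname{lcm}(M_{j,1},\dots,M_{j,L_j})$ and assume $\delta_1\ne\delta_2$. Let $N$ be an integer with $0\le N<\operatorname{lcm}(\delta_1,\delta_2)$, let $r_{j,i}$ be the remainder of $N$ modulo $M_{j,i}$ and $n_{j,i}=(N-r_{j,i})/M_{j,i}$. Let $\tilde r_{j,i}$ be integers with $0\le\tilde r_{j,i}\le M_{j,i}-1$ and $|\tilde r_{j,i}-r_{j,i}|\le\tau_j$ for all $i$, where $$\tau_j<\min(G_j,G)\quad (j=1,2),$$ with $G_j=\max_{1\le i\le L_j}\min_{q\ne i}\gcd(M_{j,i},M_{j,q})/4$ if $L_j\ge2$, $G_j=M_{j,1}/4$ if $L_j=1$, and $G=\gcd(\delta_1,\delta_2)/4$. Then the two-stage algorithm (described in the context) outputs $\hat n_{j,i}=n_{j,i}$ for all $1\le i\le L_j$, $j=1,2$, and its estimate $\hat N$ satisfies $$|\hat N-N|\le\left[\frac{L_1\tau_1+L_2\tau_2}{L_1+L_2}\right].$$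
   Context: For $x\in\mathbb R$, $[x]$ denotes the unique integer with $-1/2\le x-[x]<1/2$. Single-stage algorithm $\mathcal A$: for pairwise distinct positive integers $P_1,\dots,P_m$ ($m\ge2$), a reference index $k$ and integers $x_1,\dots,x_m$: for $i\ne k$ put $m_{ki}=\gcd(P_k,P_i)$, $\Gamma_{ki}=P_k/m_{ki}$, $\Gamma_{ik}=P_i/m_{ki}$, $\hat q_{ik}=[(x_i-x_k)/m_{ki}]$, let $\bar\Gamma_{ki}$ be an inverse of $\Gamma_{ki}$ modulo $\Gamma_{ik}$ and $\hat\xi_{ik}\equiv\hat q_{ik}\bar\Gamma_{ki}\pmod{\Gamma_{ik}}$, $0\le\hat\xi_{ik}<\Gamma_{ik}$; let $\hat n_k$ be the least nonnegative $y$ with $y\equiv\hat\xi_{ik}\pmod{\Gamma_{ik}}$ for all $i\ne k$ (the algorithm fails if none exists), and $\hat n_i=(\hat n_k\Gamma_{ki}-\hat q_{ik})/\Gamma_{ik}$ for $i\ne k$. Two-stage algorithm: Stage 1: for each group $j$, if $L_j\ge2$ apply $\mathcal A$ to $M_{j,1},\dots,M_{j,L_j}$ with inputs $\tilde r_{j,1},\dots,\tilde r_{j,L_j}$ and a reference index $k_j$ attaining $\max_i\min_{q\ne i}\gcd(M_{j,i},M_{j,q})$, obtaining $\hat K_{j,1},\dots,\hat K_{j,L_j}$; if $L_j=1$ set $\hat K_{j,1}=0$. Put $\hat N_j=[\frac1{L_j}\sum_{i=1}^{L_j}(\hat K_{j,i}M_{j,i}+\tilde r_{j,i})]$. Stage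 2: apply $\mathcal A$ to the moduli $\delta_1,\delta_2$ with inputs $\hat N_1,\hat N_2$ (any reference index), obtaining $\hat l_1,\hat l_2$. Output $\hat n_{j,i}=\hat l_j\delta_j/M_{j,i}+\hat K_{j,i}$ and $\hat N=[\frac1{L_1+L_2}\sum_{j=1}^2\sum_{i=1}^{L_j}(\hat n_{j,i}M_{j,i}+\tilde r_{j,i})]$. *)

From Stdlib Require Import ZArith Reals List.
Import ListNotations.
Open Scope Z_scope.

(* [x] : the unique integer z with -1/2 <= x - z < 1/2, i.e. floor (x + 1/2).
   (up y is the least integer > y, so up y - 1 = floor y.) *)
Definition round (x : R) : Z := (up (x + / 2) - 1)%Z.

(* Indices are 0-based: index i of the paper is i-1 here. *)
Definition sumZ (n : nat) (f : nat -> Z) : Z := fold_right Z.add 0 (map f (seq 0 n)).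
Definition lcmZ (n : nat) (f : nat -> Z) : Z := fold_right Z.lcm 1 (map f (seq 0 n)).

Definition list_min (l : list Z) : Z :=
  match l with [] => 0 | x :: t => fold_left Z.min t x end.
Definition list_max (l : list Z) : Z :=
  match l with [] => 0 | x :: t => fold_left Z.max t x end.

Definition min_gcd (L : nat) (M : nat -> Z) (i : nat) : Z :=
  list_min (map (fun q => Z.gcd (M i) (M q))
                (filter (fun q => negb (Nat.eqb q i)) (seq 0 L))).

Definition G_grp (L : nat) (M : nat -> Z) : R :=
  if (2 <=? L)%nat then (IZR (list_max (map (min_gcd L M) (seq 0 L))) / 4)%R
  else (IZR (M 0%nat) / 4)%R.

Fixpoint find_from (f : Z -> bool) (start : Z) (n : nat) : option Z :=
  match n with
  | O => None
  | S n' => if f start then Some start else find_from f (start + 1) n'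
  end.

(* None = failure.
   - the inverse of Gamma_ki modulo Gamma_ik is found by search in [0, Gamma_ik)
     (it always exists since Gamma_ki, Gamma_ik are coprime; the result of the
     algorithm does not depend on the choice of the inverse);
   - the least nonnegative simultaneous solution y, if one exists, is < lcm of
     the Gamma_ik <= their product, so searching [0, prod Gamma_ik) is exact. *)
Definition alg_A (m : nat) (P : nat -> Z) (k : nat) (x : nat -> Z)
  : option (nat -> Z) :=
  let mk i := Z.gcd (P k) (P i) in
  let Gki i := P k / mk i in
  let Gik i := P i / mk i in
  let qh i := round (IZR (x i - x k) / IZR (mk i)) in
  let inv i :=
    match find_from (fun b => (Gki i * b) mod Gik i =? 1 mod Gik i) 0
                    (Z.to_nat (Gik i)) with
    | Some b => b | None => 0 end in
  let xi i := (qh i * inv i) mod Gik i in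
  let others := filter (fun i => negb (Nat.eqb i k)) (seq 0 m) in
  let bound := fold_right Z.mul 1 (map Gik others) in
  match find_from (fun y => forallb (fun i => (y - xi i) mod Gik i =? 0) others)
                  0 (Z.to_nat bound) with
  | None => None
  | Some nk =>
      Some (fun i => if Nat.eqb i k then nk else (nk * Gki i - qh i) / Gik i)
  end.

Definition stage1 (L : nat) (M : nat -> Z) (k : nat) (rt : nat -> Z)
  : option (nat -> Z) :=
  if (2 <=? L)%nat then alg_A L M k rt else Some (fun _ => 0).

Definition Nhat_grp (L : nat) (M Kh rt : nat -> Z) : Z :=
  round (IZR (sumZ L (fun i => Kh i * M i + rt i)) / INR L).

(* Two-stage algorithm; output (nhat_1, nhat_2, Nhat) or None on failure.
   k1, k2: stage-1 reference indices; k0 in {0,1}: stage-2 reference index. *)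
Definition two_stage (L1 : nat) (M1 rt1 : nat -> Z) (k1 : nat)
                     (L2 : nat) (M2 rt2 : nat -> Z) (k2 : nat) (k0 : nat)
  : option ((nat -> Z) * (nat -> Z) * Z) :=
  match stage1 L1 M1 k1 rt1, stage1 L2 M2 k2 rt2 with
  | Some K1, Some K2 =>
      let d1 := lcmZ L1 M1 in
      let d2 := lcmZ L2 M2 in
      let N1 := Nhat_grp L1 M1 K1 rt1 in
      let N2 := Nhat_grp L2 M2 K2 rt2 in
      match alg_A 2 (fun j => if Nat.eqb j 0 then d1 else d2) k0
                    (fun j => if Nat.eqb j 0 then N1 else N2) with
      | None => None
      | Some l =>
          let n1 i := l 0%nat * d1 / M1 i + K1 i in
          let n2 i := l 1%nat * d2 / M2 i + K2 i in
          Some (n1, n2,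
                round (IZR (sumZ L1 (fun i => n1 i * M1 i + rt1 i)
                            + sumZ L2 (fun i => n2 i * M2 i + rt2 i))
                       / INR (L1 + L2)))
      end
  | _, _ => None
  end.

From Pilot Require Import Defs.
From Stdlib Require Import ZArith Reals List Lia Lra.
Open Scope Z_scope.

(* The observed remainders are the true ones plus integer errors, bounded by
   T = ⌊τ⌋ (rounding a mean of such errors keeps the integer bound T, not τ).
   Algorithm A recovers the folding numbers of N mod lcm P exactly once the
   errors of any two inputs differ by less than half of gcd(P_k, P_i): then
   q̂_ik is the exact quotient (r_i - r_k) / m_ki, the congruences for n_k are
   exactly those satisfied by the folding number of N mod lcm P, and that
   number is the least solution because it lies below lcm P / P_k.
   Stage 1 applies this inside each group, so N̂_j is within T_j of N mod δ_j;
   Stage 2 applies it to δ₁, δ₂, and as N < lcm(δ₁, δ₂) it recovers N itself,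
   which determines every n_{j,i}.  N̂ is then N plus the rounded mean error. *)

Lemma round_unique (x : R) (z : Z) :
  (IZR z - /2 <= x)%R -> (x < IZR z + /2)%R -> round x = z.
Proof.
  intros Hlo Hhi. unfold round.
  enough (z + 1 = up (x + /2)) by lia.
  apply tech_up; rewrite plus_IZR; simpl; lra.
Qed.

Lemma round_spec (x : R) : (IZR (round x) - /2 <= x < IZR (round x) + /2)%R.
Proof.
  unfold round. destruct (archimed (x + /2)).
  rewrite minus_IZR. simpl. lra.
Qed.

Lemma round_IZR (z : Z) : round (IZR z) = z.
Proof. apply round_unique; lra. Qed.

Lemma round_IZR_add (z : Z) (x : R) : round (IZR z + x) = z + round x.
Proof. destruct (round_spec x). apply round_unique; rewrite plus_IZR; lra. Qed.

Lemma round_le_compat (x y : R) : (x <= y)%R -> round x <= round y.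
Proof.
  intros Hxy. destruct (round_spec x), (round_spec y).
  apply Z.lt_succ_r, lt_IZR. rewrite succ_IZR. lra.
Qed.

Lemma round_abs_le (x B : R) : (Rabs x <= B)%R -> Z.abs (round x) <= round B.
Proof.
  intros Hx.
  assert (Hlo : (- B <= x)%R) by (pose proof (Rle_abs (- x)); rewrite Rabs_Ropp in *; lra).
  assert (Hhi : (x <= B)%R) by (pose proof (Rle_abs x); lra).
  assert (opp_B : 0 <= round B + round (- B)).
  { destruct (round_spec B), (round_spec (- B)).
    apply Z.lt_pred_le, lt_IZR. rewrite plus_IZR. simpl. lra. }
  pose proof (round_le_compat x B Hhi). pose proof (round_le_compat (- B) x Hlo).
  lia.
Qed.

Lemma round_close (y : R) (z : Z) (B : R) :
  (Rabs (y - IZR z) <= B)%R -> Z.abs (round y - z) <= round B.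
Proof.
  intros Hy. replace y with (IZR z + (y - IZR z))%R by ring.
  rewrite round_IZR_add. replace (z + _ - z) with (round (y - IZR z)) by lia.
  exact (round_abs_le _ _ Hy).
Qed.

Lemma round_div_exact (s e g : Z) :
  0 < g -> (g | s) -> 2 * Z.abs e < g -> round (IZR (s + e) / IZR g) = s / g.
Proof.
  intros Hg [c ->] He. rewrite Z_div_mult by lia.
  apply IZR_lt in Hg.
  assert (2 * IZR (Z.abs e) < IZR g)%R by (rewrite <- mult_IZR; apply IZR_lt; lia).
  assert (- IZR (Z.abs e) <= IZR e <= IZR (Z.abs e))%R
    by (rewrite <- opp_IZR; split; apply IZR_le; lia).
  rewrite plus_IZR, mult_IZR.
  apply round_unique.
  - apply (Rmult_le_reg_r (IZR g)); [lra|].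
    field_simplify; [nra | lra].
  - apply (Rmult_lt_reg_r (IZR g)); [lra|].
    field_simplify; [nra | lra].
Qed.

Lemma Int_part_ge (z : Z) (t : R) : (IZR z <= t)%R -> z <= Int_part t.
Proof.
  intros Hz. destruct (base_Int_part t).
  apply Z.lt_succ_r, lt_IZR. rewrite succ_IZR. lra.
Qed.

Lemma find_from_complete (f : Z -> bool) (n : nat) (s z : Z) :
  f z = true -> s <= z < s + Z.of_nat n ->
  exists y, find_from f s n = Some y /\ s <= y <= z /\ f y = true.
Proof.
  revert s. induction n as [|n IH]; intros s Hfz Hz; simpl in *; [lia|].
  destruct (f s) eqn:Hfs.
  - exists s. repeat split; auto; lia.
  - destruct (Z.eq_dec z s) as [->|Hzs]; [congruence|].
    destruct (IH (s + 1) Hfz ltac:(lia)) as (y & Hfind & Hy & Hfy).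
    exists y. repeat split; auto; lia.
Qed.

Lemma sumZ_S (n : nat) (f : nat -> Z) : sumZ (S n) f = sumZ n f + f n.
Proof.
  unfold sumZ. rewrite seq_S, map_app, fold_right_app. simpl.
  generalize (map f (seq 0 n)). induction l; simpl; lia.
Qed.

Lemma sumZ_dev (n : nat) (f : nat -> Z) (c t : R) :
  (forall i, (i < n)%nat -> (Rabs (IZR (f i) - c) <= t)%R) ->
  (Rabs (IZR (sumZ n f) - INR n * c) <= INR n * t)%R.
Proof.
  induction n as [|n IH]; intros Hf.
  - unfold sumZ. simpl. rewrite Rmult_0_l, Rminus_0_r, Rabs_R0. lra.
  - rewrite sumZ_S, plus_IZR, S_INR.
    specialize (IH (fun i Hi => Hf i ltac:(lia))). specialize (Hf n ltac:(lia)).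
    pose proof (Rabs_triang (IZR (sumZ n f) - INR n * c) (IZR (f n) - c)).
    replace (IZR (sumZ n f) + IZR (f n) - (INR n + 1) * c)%R
      with (IZR (sumZ n f) - INR n * c + (IZR (f n) - c))%R by ring.
    lra.
Qed.

Lemma Rabs_mean_dev (n : nat) (y c B : R) :
  (0 < n)%nat -> (Rabs (y - INR n * c) <= B)%R -> (Rabs (y / INR n - c) <= B / INR n)%R.
Proof.
  intros Hn Hy. apply lt_0_INR in Hn.
  replace (y / INR n - c)%R with ((y - INR n * c) / INR n)%R by (field; lra).
  unfold Rdiv. rewrite Rabs_mult, Rabs_inv, (Rabs_right (INR n)) by lra.
  apply Rmult_le_compat_r; [left; apply Rinv_0_lt_compat |]; lra.
Qed.

Lemma lcmZ_divide (L : nat) (M : nat -> Z) (i : nat) : (i < L)%nat -> (M i | lcmZ L M).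
Proof.
  intros Hi. unfold lcmZ.
  assert (Hin : In (M i) (map M (seq 0 L))) by (apply in_map, in_seq; lia).
  induction (map M (seq 0 L)) as [|a l IH]; simpl in *; [contradiction|].
  destruct Hin as [<-|Hin]; [apply Z.divide_lcm_l|].
  eapply Z.divide_trans; [exact (IH Hin) | apply Z.divide_lcm_r].
Qed.

Lemma lcmZ_least (L : nat) (M : nat -> Z) (X : Z) :
  (forall i, (i < L)%nat -> (M i | X)) -> (lcmZ L M | X).
Proof.
  intros HX. unfold lcmZ.
  assert (Hl : forall a, In a (map M (seq 0 L)) -> (a | X)).
  { intros a (i & <- & Hi)%in_map_iff. apply in_seq in Hi. apply HX. lia. }
  induction (map M (seq 0 L)) as [|a l IH]; simpl in *; [apply Z.divide_1_l|].
  apply Z.lcm_least; auto.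
Qed.

Lemma lcmZ_pos (L : nat) (M : nat -> Z) : (forall i, (i < L)%nat -> 0 < M i) -> 0 < lcmZ L M.
Proof.
  intros HM. unfold lcmZ.
  assert (Hl : forall a, In a (map M (seq 0 L)) -> 0 < a).
  { intros a (i & <- & Hi)%in_map_iff. apply in_seq in Hi. apply HM. lia. }
  induction (map M (seq 0 L)) as [|a l IH]; simpl in *; [lia|].
  specialize (IH (fun x Hx => Hl x (or_intror Hx))).
  assert (Z.lcm a (fold_right Z.lcm 1 l) <> 0)
    by (rewrite Z.lcm_eq_0; specialize (Hl a (or_introl eq_refl)); lia).
  pose proof (Z.lcm_nonneg a (fold_right Z.lcm 1 l)). lia.
Qed.

Lemma list_min_le (l : list Z) (x : Z) : In x l -> list_min l <= x.
Proof.
  destruct l as [|a t]; simpl; [contradiction|].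
  revert a. induction t as [|b t IH]; simpl; intros a Hx.
  - destruct Hx as [->|[]]; lia.
  - assert (Hinit : forall c, fold_left Z.min t c <= c).
    { clear. induction t as [|b t IH]; simpl; intros c; [lia|].
      specialize (IH (Z.min c b)). lia. }
    destruct Hx as [<-|[<-|Hx]]; [| | apply IH; now right];
      specialize (Hinit (Z.min a b)); lia.
Qed.

Lemma list_max_le (l : list Z) (B : Z) :
  l <> nil -> (forall x, In x l -> x <= B) -> Defs.list_max l <= B.
Proof.
  destruct l as [|a t]; simpl; intros Hnil HB; [congruence|].
  assert (Ha : a <= B) by auto. clear Hnil.
  revert a Ha HB. induction t as [|b t IH]; simpl; intros a Ha HB; auto.
  assert (Hb : b <= B) by auto.
  apply IH; [lia|]. intros x [<-|Hx]; [lia | auto].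
Qed.

Lemma divide_sub_mod (g a b N : Z) :
  0 < a -> 0 < b -> (g | a) -> (g | b) -> (g | N mod a - N mod b).
Proof.
  intros Ha Hb [ca Hca] [cb Hcb].
  rewrite !Z.mod_eq by lia. exists (cb * (N / b) - ca * (N / a)). lia.
Qed.

Lemma divide_mod_inv_iff (n a u q y : Z) :
  0 < n -> (n | a * u - 1) -> (n | y - (q * u) mod n) <-> (n | y * a - q).
Proof.
  intros Hn Hu.
  assert (Hmod : y - (q * u) mod n = y - q * u + n * (q * u / n))
    by (rewrite Z.mod_eq by lia; ring).
  rewrite Hmod. split; intros Hd.
  - rewrite Z.add_comm in Hd. apply Z.divide_add_cancel_r in Hd; [| apply Z.divide_factor_l].
    replace (y * a - q) with (a * (y - q * u) + q * (a * u - 1)) by ring.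
    apply Z.divide_add_r; apply Z.divide_mul_r; assumption.
  - apply Z.divide_add_r; [| apply Z.divide_factor_l].
    replace (y - q * u) with (u * (y * a - q) - y * (a * u - 1)) by ring.
    apply Z.divide_sub_r; apply Z.divide_mul_r; assumption.
Qed.

Section AlgorithmA.

Variables (P : nat -> Z) (k : nat).

Definition gcd_ref (i : nat) : Z := Z.gcd (P k) (P i).
Definition cof_ref (i : nat) : Z := P k / gcd_ref i.
Definition cof (i : nat) : Z := P i / gcd_ref i.
Definition qhat (x : nat -> Z) (i : nat) : Z := round (IZR (x i - x k) / IZR (gcd_ref i)).
Definition cof_ref_inv (i : nat) : Z :=
  match find_from (fun b => (cof_ref i * b) mod cof i =? 1 mod cof i) 0
                  (Z.to_nat (cof i)) with
  | Some b => b | None => 0 end.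
Definition xihat (x : nat -> Z) (i : nat) : Z := (qhat x i * cof_ref_inv i) mod cof i.
Definition others (m : nat) : list nat := filter (fun i => negb (Nat.eqb i k)) (seq 0 m).
Definition search_bound (m : nat) : Z := fold_right Z.mul 1 (map cof (others m)).
Definition solves (m : nat) (x : nat -> Z) (y : Z) : bool :=
  forallb (fun i => (y - xihat x i) mod cof i =? 0) (others m).

Lemma alg_A_unfold (m : nat) (x : nat -> Z) :
  alg_A m P k x =
  match find_from (solves m x) 0 (Z.to_nat (search_bound m)) with
  | None => None
  | Some nk => Some (fun i => if Nat.eqb i k then nk
                              else (nk * cof_ref i - qhat x i) / cof i)
  end.
Proof. reflexivity. Qed.

Lemma in_others (m i : nat) : In i (others m) <-> (i < m)%nat /\ i <> k.
Proof.
  unfold others. rewrite filter_In, in_seq.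
  destruct (Nat.eqb_spec i k); simpl; intuition lia.
Qed.

Section Cofactors.

Variable (i : nat).
Hypotheses (Pk_pos : 0 < P k) (Pi_pos : 0 < P i).

Lemma gcd_ref_pos : 0 < gcd_ref i.
Proof.
  unfold gcd_ref. pose proof (Z.gcd_nonneg (P k) (P i)).
  enough (Z.gcd (P k) (P i) <> 0) by lia. rewrite Z.gcd_eq_0. lia.
Qed.

Lemma P_i_factor : P i = gcd_ref i * cof i.
Proof.
  pose proof gcd_ref_pos. apply Z_div_exact_full_2; [lia|].
  apply Z.mod_divide; [lia | apply Z.gcd_divide_r].
Qed.

Lemma P_k_factor : P k = gcd_ref i * cof_ref i.
Proof.
  pose proof gcd_ref_pos. apply Z_div_exact_full_2; [lia|].
  apply Z.mod_divide; [lia | apply Z.gcd_divide_l].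
Qed.

Lemma cof_pos : 0 < cof i.
Proof. pose proof P_i_factor. pose proof gcd_ref_pos. nia. Qed.

Lemma cof_ref_inv_spec : (cof i | cof_ref i * cof_ref_inv i - 1).
Proof.
  pose proof gcd_ref_pos. pose proof cof_pos.
  assert (Hcop : Z.gcd (cof_ref i) (cof i) = 1) by (apply Z.gcd_div_gcd; [lia | reflexivity]).
  destruct (Z.gcd_bezout _ _ _ Hcop) as (u & v & Huv).
  set (is_inv := fun b => (cof_ref i * b) mod cof i =? 1 mod cof i).
  assert (Hu : is_inv (u mod cof i) = true).
  { unfold is_inv. apply Z.eqb_eq. rewrite Z.mul_mod_idemp_r by lia.
    replace (cof_ref i * u) with (1 + (- v) * cof i) by lia.
    apply Z.mod_add. lia. }
  pose proof (Z.mod_pos_bound u (cof i) ltac:(lia)).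
  destruct (find_from_complete is_inv (Z.to_nat (cof i)) 0 _ Hu ltac:(lia))
    as (b & Hfind & _ & Hb).
  unfold cof_ref_inv. fold is_inv. rewrite Hfind.
  apply Z.eqb_eq in Hb. apply Z.mod_divide; [lia|].
  rewrite Zminus_mod, Hb, <- Zminus_mod, Z.sub_diag. reflexivity.
Qed.

Section Remainder.

Variables (x : nat -> Z) (N : Z).
Hypothesis err_small : 2 * Z.abs ((x i - N mod P i) - (x k - N mod P k)) < gcd_ref i.

Lemma qhat_exact : gcd_ref i * qhat x i = N mod P i - N mod P k.
Proof.
  pose proof gcd_ref_pos.
  assert (Hdiv : (gcd_ref i | N mod P i - N mod P k))
    by (apply divide_sub_mod; auto; [apply Z.gcd_divide_r | apply Z.gcd_divide_l]).
  unfold qhat.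
  replace (x i - x k)
    with ((N mod P i - N mod P k) + ((x i - N mod P i) - (x k - N mod P k))) by lia.
  rewrite round_div_exact by assumption.
  symmetry. apply Z_div_exact_full_2; [lia | apply Z.mod_divide; auto; lia].
Qed.

Lemma residue_factor (y : Z) :
  y * P k + N mod P k - N mod P i = gcd_ref i * (y * cof_ref i - qhat x i).
Proof. rewrite P_k_factor at 1. pose proof qhat_exact. nia. Qed.

Lemma solves_iff (y : Z) :
  (y - xihat x i) mod cof i = 0 <-> (P i | y * P k + N mod P k - N mod P i).
Proof.
  pose proof gcd_ref_pos. pose proof cof_pos.
  rewrite Z.mod_divide by lia. unfold xihat.
  rewrite (divide_mod_inv_iff _ (cof_ref i)) by (auto using cof_ref_inv_spec).
  rewrite residue_factor, P_i_factor at 1.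
  rewrite Z.mul_divide_cancel_l by lia. reflexivity.
Qed.

Lemma output_eq (y : Z) :
  (P i | y * P k + N mod P k - N mod P i) ->
  (y * cof_ref i - qhat x i) / cof i * P i + N mod P i = y * P k + N mod P k.
Proof.
  pose proof gcd_ref_pos. pose proof cof_pos.
  pose proof (residue_factor y) as Hres. pose proof P_i_factor as HPi.
  rewrite Hres, HPi at 1. rewrite Z.mul_divide_cancel_l by lia. intros [c Hc].
  rewrite Hc in Hres |- *. rewrite Z_div_mult by lia. nia.
Qed.

End Remainder.

End Cofactors.

Lemma search_bound_pos (m : nat) :
  0 < P k -> (forall i, (i < m)%nat -> 0 < P i) -> 0 < search_bound m.
Proof.
  intros Pk HP. unfold search_bound.
  assert (Hl : forall c, In c (map cof (others m)) -> 0 < c).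
  { intros c (i & <- & (Hi & _)%in_others)%in_map_iff. apply cof_pos; auto. }
  induction (map cof (others m)) as [|c l IH]; simpl in *; [lia|].
  specialize (IH (fun a Ha => Hl a (or_intror Ha))).
  specialize (Hl c (or_introl eq_refl)). nia.
Qed.

Lemma lcmZ_divide_search_bound (m : nat) :
  0 < P k -> (forall i, (i < m)%nat -> 0 < P i) -> (lcmZ m P | P k * search_bound m).
Proof.
  intros Pk HP. apply lcmZ_least. intros i Hi.
  destruct (Nat.eq_dec i k) as [->|Hik]; [apply Z.divide_factor_l|].
  assert (Hcof : (cof i | search_bound m)).
  { unfold search_bound. assert (Hin : In (cof i) (map cof (others m)))
      by (apply in_map, in_others; auto).
    induction (map cof (others m)) as [|c l IH]; simpl in *; [contradiction|].
    destruct Hin as [<-|Hin]; [apply Z.divide_factor_l | apply Z.divide_mul_r; auto]. }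
  apply Z.divide_trans with (P k * cof i); [| apply Z.mul_divide_mono_l; exact Hcof].
  rewrite (P_k_factor i) at 1 by auto. rewrite (P_i_factor i) by auto.
  exists (cof_ref i). ring.
Qed.

Lemma alg_A_consistent (m : nat) (x : nat -> Z) (N z : Z) :
  (k < m)%nat -> (forall i, (i < m)%nat -> 0 < P i) ->
  (forall i, (i < m)%nat -> i <> k ->
     2 * Z.abs ((x i - N mod P i) - (x k - N mod P k)) < gcd_ref i) ->
  0 <= z < search_bound m ->
  (forall i, (i < m)%nat -> i <> k -> (P i | z * P k + N mod P k - N mod P i)) ->
  exists f, alg_A m P k x = Some f /\ 0 <= f k <= z /\
    forall i, (i < m)%nat -> f i * P i + N mod P i = f k * P k + N mod P k.
Proof.
  intros Hk HP Herr Hz Hcons. pose proof (HP k Hk) as Pk.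
  assert (Hsolz : solves m x z = true).
  { apply forallb_forall. intros i (Hi & Hik)%in_others. apply Z.eqb_eq.
    rewrite (solves_iff i); auto. }
  destruct (find_from_complete _ (Z.to_nat (search_bound m)) 0 z Hsolz ltac:(lia))
    as (y & Hfind & Hy & Hsoly).
  rewrite alg_A_unfold, Hfind. eexists. split; [reflexivity|].
  cbv beta. rewrite Nat.eqb_refl. split; [lia|].
  intros i Hi. destruct (Nat.eqb_spec i k) as [->|Hik]; [reflexivity|].
  apply (output_eq i); auto.
  unfold solves in Hsoly. rewrite forallb_forall in Hsoly.
  rewrite <- (solves_iff i); auto.
  apply Z.eqb_eq, Hsoly, in_others. auto.
Qed.

Lemma alg_A_recovers (m : nat) (x : nat -> Z) (N : Z) :
  (k < m)%nat -> (forall i, (i < m)%nat -> 0 < P i) ->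
  (forall i, (i < m)%nat -> i <> k ->
     2 * Z.abs ((x i - N mod P i) - (x k - N mod P k)) < gcd_ref i) ->
  exists f, alg_A m P k x = Some f /\
    forall i, (i < m)%nat -> f i * P i + N mod P i = N mod lcmZ m P.
Proof.
  intros Hk HP Herr. pose proof (HP k Hk) as Pk.
  set (D := lcmZ m P).
  assert (HD : 0 < D) by (apply lcmZ_pos; auto).
  destruct (lcmZ_divide m P k Hk) as [dk Hdk]. fold D in Hdk.
  set (z := N mod D / P k).
  assert (Hz : z * P k + N mod P k = N mod D).
  { rewrite <- (Z.mod_mod_divide N D (P k)) by (exists dk; exact Hdk).
    pose proof (Z.div_mod (N mod D) (P k) ltac:(lia)). unfold z. lia. }
  assert (Hzdk : 0 <= z < dk).
  { pose proof (Z.mod_pos_bound N D HD).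
    split; [apply Z.div_pos | apply Z.div_lt_upper_bound]; lia. }
  assert (Hdk_bound : dk <= search_bound m).
  { assert (H : 0 < P k * search_bound m) by (pose proof (search_bound_pos m Pk HP); nia).
    pose proof (Z.divide_pos_le _ _ H (lcmZ_divide_search_bound m Pk HP)) as Hle.
    fold D in Hle. nia. }
  destruct (alg_A_consistent m x N z Hk HP Herr ltac:(lia)) as (f & Hf & Hfk & Hfi).
  { intros i Hi Hik. rewrite Hz. apply divide_sub_mod; auto.
    - apply lcmZ_divide; auto.
    - apply Z.divide_refl. }
  exists f. split; [exact Hf|]. intros i Hi. rewrite Hfi by auto. fold D.
  assert (HDdiv : (D | f k * P k + N mod P k - N)).
  { apply lcmZ_least. intros j Hj. rewrite <- (Hfi j Hj).
    pose proof (Z.div_mod N (P j) ltac:(specialize (HP j Hj); lia)).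
    exists (f j - N / P j). lia. }
  destruct HDdiv as [c Hc].
  pose proof (Z.mod_pos_bound N (P k) Pk).
  apply (Z.mod_unique N D (- c)); [| lia].
  left. split; [nia|]. assert (f k <= dk - 1) by lia. nia.
Qed.

End AlgorithmA.

Lemma increasing_pos (L : nat) (M : nat -> Z) :
  0 < M 0%nat -> (forall i, (S i < L)%nat -> M i < M (S i)) ->
  forall i, (i < L)%nat -> 0 < M i.
Proof.
  intros H0 HS i. induction i as [|i IH]; intros Hi; auto.
  specialize (HS i Hi). specialize (IH ltac:(lia)). lia.
Qed.

Lemma Zabs_le_Int_part (e : Z) (tau : R) : (Rabs (IZR e) <= tau)%R -> Z.abs e <= Int_part tau.
Proof. intros He. apply Int_part_ge. rewrite <- Rabs_Zabs. exact He. Qed.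

Lemma four_Int_part_lt (tau : R) (g : Z) : (tau < IZR g / 4)%R -> 4 * Int_part tau < g.
Proof.
  intros Htau. destruct (base_Int_part tau).
  apply lt_IZR. rewrite mult_IZR. simpl. lra.
Qed.

Lemma stage1_ref_condition (L : nat) (M : nat -> Z) (k : nat) (tau : R) :
  (tau < G_grp L M)%R ->
  ((2 <= L)%nat -> (k < L)%nat /\
     forall i, (i < L)%nat -> min_gcd L M i <= min_gcd L M k) ->
  ((2 <= L)%nat -> (k < L)%nat /\
     forall i, (i < L)%nat -> i <> k -> 4 * Int_part tau < Z.gcd (M k) (M i)).
Proof.
  intros Htau Hk HL. destruct (Hk HL) as [HkL Hmax]. split; [exact HkL|].
  intros i Hi Hik. apply four_Int_part_lt.
  unfold G_grp in Htau. rewrite (proj2 (Nat.leb_le 2 L) HL) in Htau.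
  assert (Hmax_k : Defs.list_max (map (min_gcd L M) (seq 0 L)) <= min_gcd L M k).
  { apply list_max_le.
    - destruct L; [lia | discriminate].
    - intros c (j & <- & Hj)%in_map_iff. apply in_seq in Hj. apply Hmax. lia. }
  assert (Hmin_k : min_gcd L M k <= Z.gcd (M k) (M i)).
  { apply list_min_le, (in_map (fun q => Z.gcd (M k) (M q))), filter_In.
    rewrite in_seq. destruct (Nat.eqb_spec i k); simpl; intuition lia. }
  apply IZR_le in Hmax_k, Hmin_k. lra.
Qed.

Lemma stage1_recovers (L : nat) (M rt : nat -> Z) (k : nat) (N T : Z) :
  (1 <= L)%nat -> (forall i, (i < L)%nat -> 0 < M i) ->
  (forall i, (i < L)%nat -> Z.abs (rt i - N mod M i) <= T) ->
  ((2 <= L)%nat -> (k < L)%nat /\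
     forall i, (i < L)%nat -> i <> k -> 4 * T < Z.gcd (M k) (M i)) ->
  exists K, stage1 L M k rt = Some K /\
    forall i, (i < L)%nat -> K i * M i + N mod M i = N mod lcmZ L M.
Proof.
  intros HL HM He Hk. unfold stage1.
  destruct (Nat.le_gt_cases 2 L) as [HL2|HL1].
  - rewrite (proj2 (Nat.leb_le 2 L) HL2). destruct (Hk HL2) as [HkL Hgcd].
    apply alg_A_recovers; auto.
    intros i Hi Hik. specialize (Hgcd i Hi Hik).
    pose proof (He i Hi). pose proof (He k HkL). unfold gcd_ref. lia.
  - replace L with 1%nat by lia. exists (fun _ => 0). split; [reflexivity|].
    intros i Hi. replace i with 0%nat by lia.
    unfold lcmZ. simpl. rewrite Z.lcm_1_r, Z.abs_eq by (specialize (HM 0%nat HL); lia).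
    reflexivity.
Qed.

Lemma Nhat_grp_close (L : nat) (M K rt : nat -> Z) (N R T : Z) :
  (1 <= L)%nat ->
  (forall i, (i < L)%nat -> K i * M i + N mod M i = R) ->
  (forall i, (i < L)%nat -> Z.abs (rt i - N mod M i) <= T) ->
  Z.abs (Nhat_grp L M K rt - R) <= T.
Proof.
  intros HL HK He. unfold Nhat_grp. rewrite <- (round_IZR T).
  apply round_close.
  replace (IZR T) with (INR L * IZR T / INR L)%R by (field; apply not_0_INR; lia).
  apply Rabs_mean_dev; [lia|]. apply sumZ_dev. intros i Hi.
  rewrite <- minus_IZR, Rabs_Zabs. apply IZR_le.
  specialize (HK i Hi). specialize (He i Hi). lia.
Qed.

Lemma stage2_recovers (d1 d2 x1 x2 N T1 T2 : Z) (k0 : nat) :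
  0 < d1 -> 0 < d2 -> 0 <= N < Z.lcm d1 d2 ->
  Z.abs (x1 - N mod d1) <= T1 -> Z.abs (x2 - N mod d2) <= T2 ->
  4 * T1 < Z.gcd d1 d2 -> 4 * T2 < Z.gcd d1 d2 -> (k0 < 2)%nat ->
  exists l, alg_A 2 (fun j => if Nat.eqb j 0 then d1 else d2) k0
                    (fun j => if Nat.eqb j 0 then x1 else x2) = Some l /\
    l 0%nat * d1 + N mod d1 = N /\ l 1%nat * d2 + N mod d2 = N.
Proof.
  intros Hd1 Hd2 HN He1 He2 Hg1 Hg2 Hk0.
  destruct (alg_A_recovers (fun j => if Nat.eqb j 0 then d1 else d2) k0 2
              (fun j => if Nat.eqb j 0 then x1 else x2) N Hk0) as (l & Hl & Hli).
  - intros [|[|i]] Hi; cbn [Nat.eqb]; lia.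
  - intros [|[|i]] Hi Hik; destruct k0 as [|[|k0]]; unfold gcd_ref; cbn [Nat.eqb];
      try rewrite (Z.gcd_comm d2 d1); lia.
  - assert (Hlcm : lcmZ 2 (fun j => if Nat.eqb j 0 then d1 else d2) = Z.lcm d1 d2).
    { unfold lcmZ. simpl. rewrite Z.lcm_1_r, Z.abs_eq by lia. reflexivity. }
    rewrite Hlcm, Z.mod_small in Hli by lia.
    exists l. split; [exact Hl|]. split; [exact (Hli 0%nat ltac:(lia)) | exact (Hli 1%nat ltac:(lia))].
Qed.

Lemma group_outputs_correct (L : nat) (M rt K : nat -> Z) (l N : Z) (tau : R) :
  (forall i, (i < L)%nat -> 0 < M i) ->
  l * lcmZ L M + N mod lcmZ L M = N ->
  (forall i, (i < L)%nat -> K i * M i + N mod M i = N mod lcmZ L M) ->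
  (forall i, (i < L)%nat -> (Rabs (IZR (rt i - N mod M i)) <= tau)%R) ->
  forall i, (i < L)%nat ->
    l * lcmZ L M / M i + K i = (N - N mod M i) / M i /\
    (Rabs (IZR ((l * lcmZ L M / M i + K i) * M i + rt i) - IZR N) <= tau)%R.
Proof.
  intros HM Hl HK He i Hi. specialize (HM i Hi).
  assert (Hn : (l * lcmZ L M / M i + K i) * M i = N - N mod M i).
  { destruct (lcmZ_divide L M i Hi) as [c Hc]. specialize (HK i Hi).
    rewrite Hc in Hl, HK |- *. rewrite Z.mul_assoc, Z_div_mult by lia. lia. }
  split.
  - rewrite <- Hn, Z_div_mult by lia. reflexivity.
  - rewrite Hn, <- minus_IZR. replace (N - N mod M i + rt i - N) with (rt i - N mod M i) by lia.
    auto.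
Qed.

Lemma two_group_estimate (L1 L2 : nat) (f1 f2 : nat -> Z) (N : Z) (tau1 tau2 : R) :
  (1 <= L1)%nat ->
  (forall i, (i < L1)%nat -> (Rabs (IZR (f1 i) - IZR N) <= tau1)%R) ->
  (forall i, (i < L2)%nat -> (Rabs (IZR (f2 i) - IZR N) <= tau2)%R) ->
  Z.abs (round (IZR (sumZ L1 f1 + sumZ L2 f2) / INR (L1 + L2)) - N) <=
    round ((INR L1 * tau1 + INR L2 * tau2) / INR (L1 + L2)).
Proof.
  intros HL1 Hf1 Hf2. apply round_close, Rabs_mean_dev; [lia|].
  pose proof (sumZ_dev L1 f1 (IZR N) tau1 Hf1).
  pose proof (sumZ_dev L2 f2 (IZR N) tau2 Hf2).
  rewrite plus_IZR, plus_INR.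
  replace (IZR (sumZ L1 f1) + IZR (sumZ L2 f2) - (INR L1 + INR L2) * IZR N)%R
    with ((IZR (sumZ L1 f1) - INR L1 * IZR N) + (IZR (sumZ L2 f2) - INR L2 * IZR N))%R
    by ring.
  eapply Rle_trans; [apply Rabs_triang | lra].
Qed.

Theorem theorem2 (L1 L2 : nat) (M1 M2 : nat -> Z) (N : Z)
  (rt1 rt2 : nat -> Z) (tau1 tau2 : R) (k1 k2 k0 : nat) :
  (1 <= L1)%nat -> (1 <= L2)%nat ->
  0 < M1 0%nat -> (forall i, (S i < L1)%nat -> M1 i < M1 (S i)) ->
  0 < M2 0%nat -> (forall i, (S i < L2)%nat -> M2 i < M2 (S i)) ->
  lcmZ L1 M1 <> lcmZ L2 M2 ->
  0 <= N < Z.lcm (lcmZ L1 M1) (lcmZ L2 M2) ->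
  (forall i, (i < L1)%nat -> 0 <= rt1 i <= M1 i - 1) ->
  (forall i, (i < L2)%nat -> 0 <= rt2 i <= M2 i - 1) ->
  (forall i, (i < L1)%nat -> (Rabs (IZR (rt1 i - N mod M1 i)) <= tau1)%R) ->
  (forall i, (i < L2)%nat -> (Rabs (IZR (rt2 i - N mod M2 i)) <= tau2)%R) ->
  (tau1 < Rmin (G_grp L1 M1) (IZR (Z.gcd (lcmZ L1 M1) (lcmZ L2 M2)) / 4))%R ->
  (tau2 < Rmin (G_grp L2 M2) (IZR (Z.gcd (lcmZ L1 M1) (lcmZ L2 M2)) / 4))%R ->
  ((2 <= L1)%nat -> (k1 < L1)%nat /\
     forall i, (i < L1)%nat -> min_gcd L1 M1 i <= min_gcd L1 M1 k1) ->
  ((2 <= L2)%nat -> (k2 < L2)%nat /\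
     forall i, (i < L2)%nat -> min_gcd L2 M2 i <= min_gcd L2 M2 k2) ->
  (k0 < 2)%nat ->
  exists (n1h n2h : nat -> Z) (Nh : Z),
    two_stage L1 M1 rt1 k1 L2 M2 rt2 k2 k0 = Some (n1h, n2h, Nh) /\
    (forall i, (i < L1)%nat -> n1h i = (N - N mod M1 i) / M1 i) /\
    (forall i, (i < L2)%nat -> n2h i = (N - N mod M2 i) / M2 i) /\
    Z.abs (Nh - N) <=
      round ((INR L1 * tau1 + INR L2 * tau2) / INR (L1 + L2)).
Proof.
  intros HL1 HL2 HM10 HM1S HM20 HM2S _ HN _ _ He1 He2 Ht1 Ht2 Hk1 Hk2 Hk0.
  pose proof (increasing_pos L1 M1 HM10 HM1S) as HM1.
  pose proof (increasing_pos L2 M2 HM20 HM2S) as HM2.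
  apply Rmin_Rgt in Ht1 as [HtG1 Htg1], Ht2 as [HtG2 Htg2].
  assert (HT1 := fun i Hi => Zabs_le_Int_part _ _ (He1 i Hi)).
  assert (HT2 := fun i Hi => Zabs_le_Int_part _ _ (He2 i Hi)).
  destruct (stage1_recovers L1 M1 rt1 k1 N _ HL1 HM1 HT1
              (stage1_ref_condition L1 M1 k1 tau1 HtG1 Hk1)) as (K1 & HK1 & HKi1).
  destruct (stage1_recovers L2 M2 rt2 k2 N _ HL2 HM2 HT2
              (stage1_ref_condition L2 M2 k2 tau2 HtG2 Hk2)) as (K2 & HK2 & HKi2).
  destruct (stage2_recovers _ _ _ _ N _ _ k0 (lcmZ_pos L1 M1 HM1) (lcmZ_pos L2 M2 HM2) HN
              (Nhat_grp_close L1 M1 K1 rt1 N _ _ HL1 HKi1 HT1)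
              (Nhat_grp_close L2 M2 K2 rt2 N _ _ HL2 HKi2 HT2)
              (four_Int_part_lt _ _ Htg1) (four_Int_part_lt _ _ Htg2) Hk0)
    as (l & Hl & Hl1 & Hl2).
  unfold two_stage. rewrite HK1, HK2, Hl.
  pose proof (group_outputs_correct L1 M1 rt1 K1 _ N tau1 HM1 Hl1 HKi1 He1) as Hout1.
  pose proof (group_outputs_correct L2 M2 rt2 K2 _ N tau2 HM2 Hl2 HKi2 He2) as Hout2.
  do 3 eexists. split; [reflexivity|]. split; [|split].
  - intros i Hi. apply (Hout1 i Hi).
  - intros i Hi. apply (Hout2 i Hi).
  - apply two_group_estimate; auto; [intros i Hi; apply (Hout1 i Hi) | intros i Hi; apply (Hout2 i Hi)].
Qed.
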